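(* Let $K$ be a field of characteristic $\neq 2$, $n\ge1$, and let $\mathcal C$ be any EACP over $K$. Then $\mathcal C$ is not unital, i.e. there is no $e\in\mathcal C$ with $ex=x=xe$ for all $x\in\mathcal C$.
   Context: An EACP over a field $K$ (characteristic $\neq 2$) is a $K$-algebra $\mathcal C$ with a basis $\{h_1,\dots,h_n,r\}$ (called a natural basis) whose multiplication is determined by bilinearity from $$h_ir=rh_i=\tfrac12\Big(\sum_{j=1}^n a_{ij}h_j+b_ir\Big),\qquad h_ih_j=0\ (i,j=1,\dots,n),\qquad rr=0,$$ for some constants $a_{ij},b_i\in K$. *)

From HB Require Import structures.
From mathcomp Require Import all_boot all_order all_algebra.
Set Implicit Arguments. Unset Strict Implicit. Unset Printing Implicit Defensive.
Import GRing.Theory.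
Local Open Scope ring_scope.

Definition bilinear_mul (K : fieldType) (V : vectType K) (mul : V -> V -> V) :=
  (forall (c : K) (x y z : V), mul (c *: x + y) z = c *: mul x z + mul y z) /\
  (forall (c : K) (x y z : V), mul z (c *: x + y) = c *: mul z x + mul z y).

Definition natural_basis (K : fieldType) (V : vectType K) (n : nat)
    (h : 'I_n -> V) (r : V) : seq V :=
  rcons [seq h i | i <- enum 'I_n] r.

Definition is_EACP (K : fieldType) (V : vectType K) (n : nat)
    (mul : V -> V -> V) (h : 'I_n -> V) (r : V)
    (a : 'I_n -> 'I_n -> K) (b : 'I_n -> K) : Prop :=
  [/\ bilinear_mul mul,
      basis_of fullv (natural_basis h r),
      (forall i, mul (h i) r = 2^-1 *: (\sum_j a i j *: h j + b i *: r)) /\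
      (forall i, mul r (h i) = 2^-1 *: (\sum_j a i j *: h j + b i *: r)),
      (forall i j, mul (h i) (h j) = 0) &
      mul r r = 0].

From HB Require Import structures.
From mathcomp Require Import all_boot all_order all_algebra.
Set Implicit Arguments. Unset Strict Implicit. Unset Printing Implicit Defensive.
Import GRing.Theory.
Local Open Scope ring_scope.

(* Write a unit as e = d r + w with w in the span of the h_i.  Since the h_i
   annihilate each other, h_i = h_i e = d (h_i r), so every h_i r lies in the
   span of the h_i; as r r = 0, also r = e r = w r lies in that span,
   contradicting the linear independence of the natural basis. *)

Lemma span_sub_linear (K : fieldType) (V : vectType K) (f : V -> V)
    (X : seq V) (W : {vspace V}) :
  (forall (c : K) (x y : V), f (c *: x + y) = c *: f x + f y) ->
  {in X, forall x, f x \in W} -> {in <<X>>%VS, forall w, f w \in W}.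
Proof.
move=> f_lin fXW w w_X; rewrite (coord_span (X := in_tuple X) w_X).
have f0 : f 0 = 0.
  have := f_lin 1 0 0; rewrite scale1r addr0 scale1r => f0D.
  by apply: (addrI (f 0)); rewrite addr0 -f0D.
have fD x y : f (x + y) = f x + f y by have := f_lin 1 x y; rewrite !scale1r.
rewrite (big_morph f fD f0).
apply: memv_suml => i _; rewrite -[_ *: _]addr0 f_lin f0 addr0.
by apply/memvZ/fXW/mem_nth.
Qed.

Section BilinearMul.
Variables (K : fieldType) (V : vectType K) (mul : V -> V -> V).
Hypothesis mul_bilinear : bilinear_mul mul.

Lemma mul0l z : mul 0 z = 0.
Proof.
have := mul_bilinear.1 1 0 0 z; rewrite scale1r addr0 scale1r => E.
by apply: (addrI (mul 0 z)); rewrite addr0 -E.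
Qed.

Lemma mulDZl c x y z : mul (c *: x + y) z = c *: mul x z + mul y z.
Proof. exact: mul_bilinear.1. Qed.

Lemma mulDZr c x y z : mul z (c *: x + y) = c *: mul z x + mul z y.
Proof. exact: mul_bilinear.2. Qed.

Lemma mul_span_l (X : seq V) (W : {vspace V}) z :
  {in X, forall x, mul x z \in W} -> {in <<X>>%VS, forall w, mul w z \in W}.
Proof. by apply: span_sub_linear => c x y; rewrite mulDZl. Qed.

Lemma mul_span_r (X : seq V) (W : {vspace V}) z :
  {in X, forall x, mul z x \in W} -> {in <<X>>%VS, forall w, mul z w \in W}.
Proof. by apply: span_sub_linear => c x y; rewrite mulDZr. Qed.

Theorem square_zero_basis_not_unital (H : seq V) (r : V) :
  basis_of fullv (r :: H) -> {in H &, forall x y, mul x y = 0} ->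
  mul r r = 0 -> ~ (exists e : V, forall x : V, mul e x = x /\ mul x e = x).
Proof.
move=> basis_rH mulHH mulrr [e unit_e].
have /andP[r_notin_H _] : (r \notin <<H>>%VS) && free H.
  by rewrite -free_cons; exact: basis_free basis_rH.
have : e \in <<r :: H>>%VS by rewrite (span_basis basis_rH) memvf.
rewrite span_cons => /memv_addP[_ /vlineP[d ->] [w w_H e_eq]]; subst e.
have mulHw x : x \in H -> mul x w = 0.
  move=> xH; apply/eqP; rewrite -memv0.
  by apply: mul_span_r w_H => y yH; rewrite mulHH ?mem0v.
have mulHr x : x \in H -> mul x r \in <<H>>%VS.
  move=> xH; have := (unit_e x).2; rewrite mulDZr mulHw // addr0.
  have [-> | d_neq0] := eqVneq d 0.
    by rewrite scale0r => <-; rewrite mul0l // mem0v.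
  move=> dxr_x; rewrite -[mul x r]scale1r -(mulVf d_neq0) -scalerA dxr_x.
  by apply/memvZ/memv_span.
move/negP: r_notin_H; apply.
have [<- _] := unit_e r; rewrite mulDZl mulrr scaler0 add0r.
exact: mul_span_l mulHr w w_H.
Qed.

End BilinearMul.

Theorem mainTheorem5 (K : fieldType) (V : vectType K) (n : nat)
    (mul : V -> V -> V) (h : 'I_n -> V) (r : V)
    (a : 'I_n -> 'I_n -> K) (b : 'I_n -> K) :
  (2%:R : K) != 0 -> (1 <= n)%N -> is_EACP mul h r a b ->
  ~ (exists e : V, forall x : V, mul e x = x /\ mul x e = x).
Proof.
move=> _ _ [mul_bilinear basis_hr _ mulhh mulrr].
have basis_rh : basis_of fullv (r :: [seq h i | i <- enum 'I_n]).
  by rewrite -(perm_basis _ (_ : perm_eq (natural_basis h r) _)) // perm_rcons.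
apply: (square_zero_basis_not_unital mul_bilinear basis_rh _ mulrr).
by move=> _ _ /mapP[i _ ->] /mapP[j _ ->]; exact: mulhh.
Qed.
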